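(* Let $\Phi$ be an $N\times\mathcal{C}$ complex matrix with no repeated columns which is $\eta$-StRIP-able with $\eta>1/2$, let $\epsilon>0$, and assume $k<\epsilon(\mathcal{C}-1)+1$ and $N=O\left(\left(\frac{k\log\mathcal{C}}{\epsilon^2}\right)^{1/\eta}\right)$; let $\delta:=2\exp\left[-\frac{[\epsilon-(k-1)/(\mathcal{C}-1)]^2N^{\eta}}{8k}\right]$. Let $w$ be a fixed column index of $\Phi$, and let $\kappa=\{\kappa_1,\dots,\kappa_k\}$ be the first $k$ elements of a uniformly random permutation of $\{1,\dots,\mathcal{C}\}\setminus\{w\}$. Then $$\mathbb{E}\left[\left\|\frac{1}{\sqrt N}\Phi_\kappa^{\dagger}\frac{1}{\sqrt N}\varphi_w\right\|^2\right]=\frac{k}{N}\,\frac{\mathcal{C}-N}{\mathcal{C}-1},$$ where the expectation is with respect to the choice of $\kappa$.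
   Context: Columns of $\Phi$ are denoted $\varphi_1,\dots,\varphi_{\mathcal{C}}$, with entries $\varphi_j(x)$, $x=1,\dots,N$. For $0<\eta\le 1$, $\Phi$ is called $\eta$-StRIP-able if: (St1) $\sum_{j=1}^{\mathcal{C}}\varphi_j(x)\overline{\varphi_j(y)}=0$ for $x\neq y$, and $\sum_{j=1}^{\mathcal{C}}\varphi_j(x)=0$ for all $x$; (St2) the columns form a group under pointwise multiplication, whose identity is the all-ones column $\varphi_1$; (St3) for all $j\in\{2,\dots,\mathcal{C}\}$, $\left|\sum_x\varphi_j(x)\right|^2\leq N^{2-\eta}$. For a set $\kappa$ of column indices, $\Phi_\kappa$ is the $N\times|\kappa|$ submatrix of the columns indexed by $\kappa$, and $\Phi_\kappa^\dagger$ its conjugate transpose; $\|\cdot\|$ is the Euclidean norm. *)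

From HB Require Import structures.
From mathcomp Require Import all_boot all_order all_algebra all_fingroup.
From mathcomp Require Import complex.
From mathcomp Require Import reals sequences exp.
Set Implicit Arguments. Unset Strict Implicit. Unset Printing Implicit Defensive.
Import Order.TTheory GRing.Theory Num.Theory.
Local Open Scope ring_scope.
Local Open Scope complex_scope.

Definition phicol (R : realType) (N C : nat) (Phi : 'M[R[i]]_(N, C)) (j : 'I_C)
  : 'cV[R[i]]_N := col j Phi.

Definition adjmx (R : realType) (m n : nat) (A : 'M[R[i]]_(m, n)) : 'M[R[i]]_(n, m) :=
  (map_mx (fun z => z^*) A)^T.

Definition sqnorm (R : realType) (n : nat) (v : 'cV[R[i]]_n) : R[i] :=
  \sum_(i < n) `|v i ord0| ^+ 2.

Definition no_repeated_columns (R : realType) (N C : nat) (Phi : 'M[R[i]]_(N, C)) :=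
  injective (phicol Phi).

(* eta-StRIP-ability (indices: column 1 of the paper is the ordinal 0). *)
Definition StRIPable (R : realType) (eta : R) (N C : nat) (Phi : 'M[R[i]]_(N, C)) :=
  [/\ 0 < eta, eta <= 1,
   (forall x y : 'I_N, x != y -> \sum_(j < C) Phi x j * (Phi y j)^* = 0) /\
   (forall x : 'I_N, \sum_(j < C) Phi x j = 0),
   (* St2: columns form a group under pointwise multiplication, identity = phi_1 = all-ones *)
   [/\ forall j : 'I_C, (j : nat) = 0%N -> forall x, Phi x j = 1,
       forall j l : 'I_C, exists m : 'I_C, forall x, Phi x m = Phi x j * Phi x l
     & forall j : 'I_C, exists m : 'I_C, forall x, Phi x m * Phi x j = 1]
   &
   forall j : 'I_C, (j : nat) <> 0%N ->
     `|\sum_(x < N) Phi x j| ^+ 2 <= ((N%:R : R) `^ (2 - eta))%:C].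

(* kappa: the first k elements of the random permutation of {1..C}\{w}
   encoded by a permutation sigma of 'I_C fixing w (listing of the remaining
   indices in the order sigma j, j increasing, j <> w). *)
Definition kappa_of (C : nat) (w : 'I_C) (k : nat) (sigma : {perm 'I_C}) : 'I_k -> 'I_C :=
  fun i => nth w [seq sigma j | j <- enum 'I_C & j != w] i.

(* Uniform expectation over permutations of {1..C}\{w} (= perms fixing w). *)
Definition Eperm (R : realType) (C : nat) (w : 'I_C) (f : {perm 'I_C} -> R[i]) : R[i] :=
  (#|[set s : {perm 'I_C} | s w == w]|%:R)^-1 *
    \sum_(s : {perm 'I_C} | s w == w) f s.
Arguments kappa_of {C} w k sigma _.

From HB Require Import structures.
From mathcomp Require Import all_boot all_order all_algebra all_fingroup.
From mathcomp Require Import complex.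
From mathcomp Require Import reals sequences exp.
From mathcomp Require Import ring lra.
Set Implicit Arguments. Unset Strict Implicit. Unset Printing Implicit Defensive.
Import Order.TTheory GRing.Theory Num.Theory.
Local Open Scope ring_scope.
Local Open Scope complex_scope.

(* By (St2) every row of Phi is a character of the group of columns, so all
   entries have modulus one; together with the row orthogonality (St1) this
   gives sum_j |<phi_j, phi_w>|^2 = C N, of which the term j = w contributes N^2.
   The columns kappa_i are each uniformly distributed on {j <> w}, so the
   expectation is k/(C-1) times the remaining sum C N - N^2, scaled by 1/N^2. *)

Definition coldot (R : realType) (N C : nat) (Phi : 'M[R[i]]_(N, C)) (j l : 'I_C)
  : R[i] := \sum_(x < N) (Phi x j)^* * Phi x l.

Lemma eq1_mul_inv_closed (R : realFieldType) (I : finType) (F : I -> R) :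
  (forall j, 0 <= F j) ->
  (forall j l, exists m, F m = F j * F l) ->
  (forall j, exists m, F m * F j = 1) ->
  forall j, F j = 1.
Proof.
move=> F_ge0 F_mul F_inv j.
have [jmax _ Fmax] := @arg_maxP _ _ _ j predT F isT.
have {}Fmax l : F l <= F jmax := Fmax l isT.
have Fmax_le1 : F jmax <= 1.
  have [m Fm] := F_mul jmax jmax.
  have := Fmax m; rewrite Fm; have := F_ge0 jmax; nra.
have [m Fmj] := F_inv j.
have Fj_le1 : F j <= 1 by apply: le_trans (Fmax j) Fmax_le1.
have Fm_le1 : F m <= 1 by apply: le_trans (Fmax m) Fmax_le1.
by have := F_ge0 j; have := F_ge0 m; nra.
Qed.

Lemma norm_entry_col_group (R : realType) (N C : nat) (Phi : 'M[R[i]]_(N, C)) :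
  (forall j l : 'I_C, exists m : 'I_C, forall x, Phi x m = Phi x j * Phi x l) ->
  (forall j : 'I_C, exists m : 'I_C, forall x, Phi x m * Phi x j = 1) ->
  forall x j, `|Phi x j| = 1.
Proof.
move=> Phi_mul Phi_inv x j.
pose F l := complex.Re `|Phi x l|.
have FE l : (F l)%:C = `|Phi x l| by rewrite RRe_real ?normr_real.
suff /(_ j) F1 : forall l, F l = 1 by rewrite -FE F1.
apply: eq1_mul_inv_closed => [l|l l'|l].
- by rewrite -ler0c FE.
- have [m Pm] := Phi_mul l l'; exists m.
  by apply: complexI; rewrite rmorphM /= !FE Pm normrM.
- have [m Pm] := Phi_inv l; exists m.
  by apply: complexI; rewrite rmorphM /= !FE -normrM Pm normr1.
Qed.

Section ColumnDots.
Variables (R : realType) (N C : nat) (Phi : 'M[R[i]]_(N, C)).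
Hypothesis Phi_rows_orth :
  forall x y : 'I_N, x != y -> \sum_(j < C) Phi x j * (Phi y j)^* = 0.
Hypothesis Phi_norm1 : forall x j, `|Phi x j| = 1.

Lemma mul_conj_entry x j : Phi x j * (Phi x j)^* = 1.
Proof. by rewrite -sqr_normc Phi_norm1 expr1n. Qed.

Lemma coldot_diag j : coldot Phi j j = N%:R.
Proof.
rewrite /coldot (eq_bigr (fun=> 1)) ?sumr_const ?card_ord // => x _.
by rewrite mulrC mul_conj_entry.
Qed.

Lemma sum_sqr_norm_coldot l : \sum_(j < C) `|coldot Phi j l| ^+ 2 = C%:R * N%:R.
Proof.
have sqrE j : `|coldot Phi j l| ^+ 2 =
    \sum_(x < N) \sum_(y < N) (Phi x l * (Phi y l)^*) * (Phi y j * (Phi x j)^*).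
  rewrite sqr_normc rmorph_sum mulr_suml; apply: eq_bigr => x _.
  rewrite mulr_sumr; apply: eq_bigr => y _.
  by rewrite rmorphM /= conjcK; ring.
rewrite (eq_bigr _ (fun j _ => sqrE j)) exchange_big /=.
rewrite (eq_bigr (fun=> C%:R)) ?sumr_const ?card_ord ?mulr_natr // => x _.
rewrite exchange_big /= (bigD1 x) //= [X in _ + X]big1 => [|y yx]; last first.
  by rewrite -mulr_sumr Phi_rows_orth ?mulr0.
rewrite addr0 -mulr_sumr mul_conj_entry mul1r.
by rewrite (eq_bigr (fun=> 1)) ?sumr_const ?card_ord // => j _; rewrite mul_conj_entry.
Qed.

Lemma sum_neq_sqr_norm_coldot l :
  \sum_(j | j != l) `|coldot Phi j l| ^+ 2 = C%:R * N%:R - N%:R ^+ 2.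
Proof.
rewrite -(sum_sqr_norm_coldot l) [in RHS](bigD1 l) //= coldot_diag ger0_norm ?ler0n //.
by rewrite addrC addrK.
Qed.

End ColumnDots.

Lemma sqnorm_scale_adj_colsub (R : realType) (N C k : nat) (Phi : 'M[R[i]]_(N, C))
    (f : 'I_k -> 'I_C) (a b : R[i]) (l : 'I_C) :
  sqnorm (a *: adjmx (colsub f Phi) *m (b *: phicol Phi l))
  = `|a * b| ^+ 2 * \sum_(i < k) `|coldot Phi (f i) l| ^+ 2.
Proof.
rewrite /sqnorm mulr_sumr; apply: eq_bigr => i _.
rewrite -exprMn -normrM; congr (`|_| ^+ 2).
rewrite !mxE /coldot mulr_sumr; apply: eq_bigr => x _.
by rewrite /adjmx /phicol !mxE; ring.
Qed.

Section UniformPermutations.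
Variables (C : nat) (w : 'I_C).

Let stab := [set s : {perm 'I_C} | s w == w].

(* Transpositions fixing w act transitively on {j <> w}. *)
Lemma sum_stab_perm_eval (V : nmodType) (j0 : 'I_C) (g : 'I_C -> V) :
  j0 != w ->
  (\sum_(s : {perm 'I_C} | s w == w) g (s j0)) *+ C.-1 =
  (\sum_(j | j != w) g j) *+ #|stab|.
Proof.
move=> j0w.
have eval_indep j : j != w -> \sum_(s : {perm 'I_C} | s w == w) g (s j0)
                            = \sum_(s : {perm 'I_C} | s w == w) g (s j).
  move=> jw; rewrite (reindex_inj (mulgI (tperm j0 j))) /=.
  apply: eq_big => s; first by rewrite permM tpermD // eq_sym.
  by move=> _; rewrite permM tpermL.
rewrite -[C in _ *+ C.-1]card_ord -(cardC1 w) -[LHS]sumr_const.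
rewrite (eq_bigr (fun j => \sum_(s : {perm 'I_C} | s w == w) g (s j))); last first.
  by move=> j /= /eval_indep.
rewrite (eq_bigl (fun j => j != w)) // exchange_big /= -sumr_const.
rewrite [RHS](eq_bigl (fun s : {perm 'I_C} => s w == w)) => [|s]; last by rewrite inE.
apply: eq_bigr => s /eqP sw.
rewrite [RHS](reindex_inj (@perm_inj _ s)) /=.
by apply: eq_bigl => j; rewrite -[in RHS]sw (inj_eq perm_inj).
Qed.

Lemma size_enum_neq : size [seq j <- enum 'I_C | j != w] = C.-1.
Proof.
have := count_predC (pred1 w) (enum 'I_C).
rewrite (count_uniq_mem _ (enum_uniq _)) mem_enum /= add1n size_enum_ord.
by move=> /(congr1 predn) /= <-; rewrite size_filter.
Qed.

Lemma kappa_ofE k (s : {perm 'I_C}) (i : 'I_k) : (k <= C.-1)%N ->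
  kappa_of w k s i = s (nth w [seq j <- enum 'I_C | j != w] i).
Proof.
by move=> kC; rewrite /kappa_of (nth_map w) // size_enum_neq (leq_trans _ kC).
Qed.

Lemma Eperm_sum_kappa (R : realType) k (g : 'I_C -> R[i]) : (k <= C.-1)%N ->
  Eperm w (fun s => \sum_(i < k) g (kappa_of w k s i))
  = k%:R / C.-1%:R * \sum_(j | j != w) g j.
Proof.
move=> kC; have [->|k_gt0] := posnP k.
  by rewrite /Eperm big1 ?mulr0 ?mul0r // => s _; rewrite big_ord0.
have nz : (C.-1%:R : R[i]) != 0 by rewrite pnatr_eq0 -lt0n (leq_trans k_gt0).
have stabz : (#|stab|%:R : R[i]) != 0.
  by rewrite pnatr_eq0 -lt0n; apply/card_gt0P; exists 1%g; rewrite inE perm1.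
have sum_eval i : \sum_(s : {perm 'I_C} | s w == w) g (kappa_of w k s i)
                  = (\sum_(j | j != w) g j) * #|stab|%:R / C.-1%:R.
  pose e := nth w [seq j <- enum 'I_C | j != w] i.
  have ew : e != w.
    have ik : (i < size [seq j <- enum 'I_C | j != w])%N.
      by rewrite size_enum_neq (leq_trans (ltn_ord i)).
    by have := mem_nth w ik; rewrite mem_filter => /andP[].
  have := sum_stab_perm_eval g ew; rewrite -[LHS]mulr_natr -[RHS]mulr_natr => <-.
  by rewrite mulrK ?unitfE //; apply: eq_bigr => s _; rewrite kappa_ofE.
rewrite /Eperm exchange_big /= (eq_bigr _ (fun i _ => sum_eval i)) sumr_const.
by rewrite card_ord -mulr_natr; field; rewrite nz stabz.
Qed.

End UniformPermutations.

Theorem lemma3p10 (R : realType) (N C : nat) (Phi : 'M[R[i]]_(N, C))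
  (eta eps : R) (k : nat) (w : 'I_C) :
  no_repeated_columns Phi ->
  StRIPable eta Phi ->
  1 / 2 < eta ->
  0 < eps ->
  (k%:R : R) < eps * (C.-1)%:R + 1 ->
  (k <= C.-1)%N ->
  (exists c : R, 0 < c /\
     (N%:R : R) <= c * ((k%:R * ln (C%:R : R) / eps ^+ 2) `^ eta^-1)) ->
  let delta : R :=
    2 * expR (- ((eps - (k%:R - 1) / (C.-1)%:R) ^+ 2 * (N%:R `^ eta))
              / (8 * k%:R)) in
  Eperm w (fun sigma =>
    sqnorm (((Num.sqrt (N%:R : R))^-1)%:C *:
              adjmx (colsub (kappa_of w k sigma) Phi)
            *m (((Num.sqrt (N%:R : R))^-1)%:C *: phicol Phi w)))
  = (k%:R / N%:R) * ((C%:R - N%:R) / (C.-1)%:R).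
Proof.
move=> _ [_ _ [rows_orth _] [_ Phi_mul Phi_inv] _] _ _ _ kC _ _.
have norm1 := norm_entry_col_group Phi_mul Phi_inv.
set c := ((Num.sqrt (N%:R : R))^-1)%:C.
have sqr_c : `|c * c| ^+ 2 = (N%:R ^+ 2)^-1 :> R[i].
  have -> : c * c = (N%:R)^-1.
    by rewrite /c -rmorphM /= -expr2 exprVn sqr_sqrtr ?ler0n // fmorphV rmorph_nat.
  by rewrite ger0_norm ?invr_ge0 ?ler0n // exprVn.
rewrite /Eperm; under eq_bigr do rewrite sqnorm_scale_adj_colsub.
rewrite -mulr_sumr mulrCA.
have := Eperm_sum_kappa w (fun j => `|coldot Phi j w| ^+ 2) kC; rewrite /Eperm => ->.
rewrite sum_neq_sqr_norm_coldot // sqr_c.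
have [->|N_gt0] := posnP N; first by rewrite !invr0; ring.
have Nz : (N%:R : R[i]) != 0 by rewrite pnatr_eq0 -lt0n.
have [->|nz] := eqVneq (C.-1%:R : R[i]) 0; first by rewrite !invr0 !(mulr0, mul0r).
by field; rewrite Nz nz.
Qed.
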